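(* Let $q\in(0,1)$, let $\omega_1,\dots,\omega_m>0$ with $\sum_{i=1}^m\omega_i=1$, and let $X_1,\dots,X_m$ be positive random variables with continuous distributions $p_1,\dots,p_m$ and all with the same finite mean $\mathbb E[X_i]=\mu>0$. Let $X$ be a random variable with the mixture distribution $p=\sum_{i=1}^m\omega_i p_i$. Then $$\kappa_q(X)\ \ge\ \sum_{i=1}^m \omega_i\,\kappa_q(X_i).$$
   Context: For a positive random variable $Y$ with continuous distribution and finite mean, and $q\in(0,1)$, the exceedance threshold is $h_Y(q)=\inf\{h\ge 0:\ \mathbb P(Y>h)\le q\}$ and the (theoretical) quantile contribution is $$\kappa_q(Y)=q\,\frac{\mathbb E[Y\mid Y>h_Y(q)]}{\mathbb E[Y]}=\frac{\mathbb E[Y\mathbf 1_{Y>h_Y(q)}]}{\mathbb E[Y]}.$$ *)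

From HB Require Import structures.
From mathcomp Require Import all_boot all_order all_algebra.
From mathcomp Require Import all_classical all_reals all_analysis.
Set Implicit Arguments. Unset Strict Implicit. Unset Printing Implicit Defensive.
Import Order.TTheory GRing.Theory Num.Theory.
Local Open Scope classical_set_scope.
Local Open Scope ring_scope.

(* Everything is expressed through the distribution (a Borel probability
   measure on R) of the random variable, since h_Y(q) and kappa_q(Y) only
   depend on the law of Y. *)

Definition hY (R : realType) (P : probability R R) (q : R) : R :=
  inf [set h : R | 0 <= h /\ (P `]h, +oo[%classic <= q%:E)%E].

Definition kappa (R : realType) (P : probability R R) (q : R) : R :=
  fine (\int[P]_(x in `]hY P q, +oo[%classic) x%:E)%E / fine (\int[P]_x x%:E)%E.

From HB Require Import structures.
From mathcomp Require Import all_boot all_order all_algebra.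
From mathcomp Require Import all_classical all_reals all_analysis.
From mathcomp Require Import measurable_realfun.
Import Order.TTheory GRing.Theory Num.Theory.
Local Open Scope classical_set_scope.
Local Open Scope ring_scope.

Local Notation ray c := (`]c, +oo[%classic : set _).

(* For thresholds a, h >= 0 one has pointwise
     x 1_{x > a} + h 1_{x > h} <= x 1_{x > h} + h 1_{x > a}.
   Integrating against p_i with a = h_{X_i}(q), for which P(X_i > a) <= q, gives
     E[X_i 1_{X_i > h_{X_i}(q)}] + h P(X_i > h) <= E[X_i 1_{X_i > h}] + h q.
   Average these with the weights w_i at h = h_X(q): the left side contains
   h P(X > h) >= h q (by atomlessness when h > 0), and the right side is
   E[X 1_{X > h}] + h q.  Hence sum_i w_i E[X_i 1_{X_i > h_{X_i}(q)}] <=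
   E[X 1_{X > h_X(q)}], and dividing by the common mean mu = E[X] gives the
   claim. *)

Section tail_limits.
Context {R : realType}.

Lemma tail_le_right (Q : {measure set R -> \bar R}) (h : R) (y : \bar R) :
  (forall r, h < r -> (Q (ray r) <= y)%E) -> (Q (ray h) <= y)%E.
Proof.
move=> Qy; pose F n := ray (h + n.+1%:R^-1).
have UF : \bigcup_n F n = ray h.
  apply/seteqP; split=> x /=.
    case=> n _; rewrite /F /= !in_itv /= !andbT; apply: le_lt_trans.
    by rewrite lerDl invr_ge0.
  rewrite in_itv /= andbT => /ltr_add_invr[n hn].
  by exists n => //; rewrite /F /= in_itv /= andbT.
rewrite -UF; apply: cvge_to_le (nondecreasing_cvg_mu _ _ _) _.
- by move=> n; exact: measurable_itv.
- by rewrite UF; exact: measurable_itv.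
- move=> m n mn; apply/subsetPset => x; rewrite /F /= !in_itv /= !andbT.
  by apply: le_lt_trans; rewrite lerD2l lef_pV2 ?posrE // ler_nat ltnS.
- by apply: nearW => n; apply: Qy; rewrite ltrDl invr_gt0.
Qed.

Lemma tail_ge_left (Q : {finite_measure set R -> \bar R}) (h : R) (y : \bar R) :
  (forall r, r < h -> (y <= Q (ray r))%E) -> (y <= Q `[h, +oo[%classic)%E.
Proof.
move=> Qy; pose F n := ray (h - n.+1%:R^-1).
have IF : \bigcap_n F n = `[h, +oo[%classic.
  apply/seteqP; split=> x /=; last first.
    rewrite in_itv /= andbT => hx n _; rewrite /F /= in_itv /= andbT.
    by apply: lt_le_trans hx; rewrite ltrBlDr ltrDl invr_gt0.
  move=> Fx; rewrite in_itv /= andbT leNgt; apply/negP => /ltr_add_invr[n hn].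
  have := Fx n I; rewrite /F /= in_itv /= andbT ltrBlDr.
  by rewrite ltNge (ltW hn).
rewrite -IF; apply: cvge_to_ge (nonincreasing_cvg_mu _ _ _ _) _.
- by rewrite ltey_eq fin_num_measure //; exact: measurable_itv.
- by move=> n; exact: measurable_itv.
- by rewrite IF; exact: measurable_itv.
- move=> m n mn; apply/subsetPset => x; rewrite /F /= !in_itv /= !andbT.
  by apply: le_lt_trans; rewrite lerD2l lerN2 lef_pV2 ?posrE // ler_nat ltnS.
- by apply: nearW => n; apply: Qy; rewrite ltrBlDr ltrDl invr_gt0.
Qed.

Lemma tail_small (Q : probability R R) {e : R} : 0 < e ->
  exists r, 0 <= r /\ (Q (ray r) <= e%:E)%E.
Proof.
move=> e_gt0; apply: contrapT => /forallNP Qe.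
pose F n : set R := ray n%:R.
have IF : \bigcap_n F n = set0.
  apply/seteqP; split=> // x Fx; have ltx := archi_boundP (normr_ge0 x).
  have := Fx (Num.bound `|x|)%N I; rewrite /F /= in_itv /= andbT.
  by move=> /(lt_trans ltx); rewrite ltNge ler_norm.
have : (e%:E <= Q (\bigcap_n F n))%E.
  apply: cvge_to_ge (nonincreasing_cvg_mu _ _ _ _) _.
  - by rewrite ltey_eq fin_num_measure //; exact: measurable_itv.
  - by move=> n; exact: measurable_itv.
  - by rewrite IF.
  - move=> m n mn; apply/subsetPset => x; rewrite /F /= !in_itv /= !andbT.
    by apply: le_lt_trans; rewrite ler_nat.
  - apply: nearW => n; rewrite leNgt; apply/negP => Fn.
    by apply: (Qe n%:R); split; [exact: ler0n | exact: ltW].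
by rewrite IF measure0 lee_fin leNgt e_gt0.
Qed.

End tail_limits.

Section exceedance_threshold.
Context {R : realType} (Q : probability R R) (q : R).

Let S := [set h : R | 0 <= h /\ (Q (ray h) <= q%:E)%E].

Let hYE : hY Q q = inf S. Proof. by []. Qed.

Let S_lbound : has_lbound S. Proof. by exists 0 => h []. Qed.

Lemma hY_ge0 : 0 <= hY Q q.
Proof.
rewrite hYE; have [[h Sh]|/forallNP S0] := pselect (exists h, S h).
  by apply: lb_le_inf; [exists h | move=> r []].
by rewrite (_ : S = set0) ?inf0 //; apply/seteqP; split=> // h /S0.
Qed.

Lemma tail_hY_le : 0 < q -> (Q (ray (hY Q q)) <= q%:E)%E.
Proof.
move=> q_gt0; have [r Sr] := tail_small Q q_gt0.
have S_inf : has_inf S by split; [exists r | exact: S_lbound].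
apply: tail_le_right => r' /[!hYE] /ltr_add_invr[n hn].
have n_gt0 : 0 < n.+1%:R^-1 :> R by rewrite invr_gt0.
have [s [_ Qs] ls] := inf_adherent n_gt0 S_inf.
apply: le_trans Qs; apply: le_measure; rewrite ?inE; try exact: measurable_itv.
by apply: subitvPl; rewrite bnd_simp ltW // (lt_trans ls hn).
Qed.

Lemma lt_tail_hY (r : R) : 0 < hY Q q -> r < hY Q q ->
  (q%:E < Q (ray r))%E.
Proof.
(* candidates for [hY] are nonnegative, so compare with [max r 0] instead of [r] *)
move=> h_gt0 rh; pose s := Num.max r 0.
have sh : s < hY Q q by rewrite gt_max rh h_gt0.
apply: (@lt_le_trans _ _ (Q (ray s))).
  rewrite ltNge; apply/negP => Qs; move: sh; rewrite hYE ltNge.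
  by rewrite (ge_inf S_lbound) //; split; [rewrite le_max lexx orbT|].
apply: le_measure; rewrite ?inE; try exact: measurable_itv.
by apply: subitvPl; rewrite bnd_simp le_max lexx.
Qed.

Lemma tail_hY_ge : (forall x, Q [set x] = 0%E) -> 0 < hY Q q ->
  (q%:E <= Q (ray (hY Q q)))%E.
Proof.
move=> atomless h_gt0.
have -> : Q (ray (hY Q q)) = Q `[hY Q q, +oo[%classic.
  rewrite -(@setU1itv _ _ +oo%O _ false) // measureU //; last first.
    by apply/seteqP; split=> // x [/= ->]; rewrite in_itv /= ltxx.
  by rewrite [X in X + _]atomless add0e.
by apply: tail_ge_left => r rh; exact/ltW/lt_tail_hY.
Qed.

End exceedance_threshold.

Section bathtub.
Context {R : realType} (Q : {measure set R -> \bar R}).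

Let mul_indic_ray_ge0 (c x : R) : 0 <= c -> 0 <= x * \1_(ray c) x.
Proof.
move=> c_ge0; rewrite indicE mem_setE /= in_itv /= andbT.
by case: ltP => [/ltW/(le_trans c_ge0) x_ge0|]; rewrite ?mulr1 ?mulr0.
Qed.

Let integral_rayE (c : R) :
  (\int[Q]_(x in ray c) x%:E = \int[Q]_x (x * \1_(ray c) x)%:E)%E.
Proof.
by rewrite integral_mkcond epatch_indic; apply: eq_integral => x _; rewrite EFinM.
Qed.

Let measure_rayE (h c : R) : 0 <= h ->
  (h%:E * Q (ray c) = \int[Q]_x (h * \1_(ray c) x)%:E)%E.
Proof.
move=> h_ge0; rewrite -[ray c]setIT -integral_indic // setIT.
rewrite -ge0_integralZl // ?lee_fin //.
by apply/measurable_EFinP; exact: measurable_indic.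
Qed.

Lemma tail_integral_bathtub {a h : R} : 0 <= a -> 0 <= h ->
  (\int[Q]_(x in ray a) x%:E + h%:E * Q (ray h) <=
   \int[Q]_(x in ray h) x%:E + h%:E * Q (ray a))%E.
Proof.
move=> a_ge0 h_ge0.
have mf c : measurable_fun setT (fun x : R => (x * \1_(ray c) x)%:E).
  by apply/measurable_EFinP; apply: measurable_funM => //; exact: measurable_indic.
have mg c : measurable_fun setT (fun x : R => (h * \1_(ray c) x)%:E).
  by apply/measurable_EFinP; apply: measurable_funM => //; exact: measurable_indic.
have g_ge0 c (x : R) : (0 <= (h * \1_(ray c) x)%:E)%E by rewrite lee_fin mulr_ge0.
rewrite !integral_rayE !measure_rayE // -!ge0_integralD //;
  try by move=> x _; rewrite lee_fin mul_indic_ray_ge0.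
apply: ge0_le_integral => //; try exact: emeasurable_funD.
  by move=> x _; rewrite adde_ge0 // lee_fin mul_indic_ray_ge0.
move=> x _; rewrite -!EFinD lee_fin !indicE !mem_setE /= !in_itv /= !andbT.
by case: ltP => ax; case: ltP => hx; rewrite ?mulr1 ?mulr0 ?addr0 ?add0r // ltW.
Qed.

End bathtub.

Lemma integral_id_ray0 {R : realType} (Q : {measure set R -> \bar R}) :
  Q `]-oo, 0]%classic = 0%E ->
  (\int[Q]_x x%:E = \int[Q]_(x in ray 0%R) x%:E)%E.
Proof.
move=> Q_neg; have mid : measurable_fun setT (fun x : R => x%:E).
  exact/measurable_EFinP.
rewrite -(itv_setU_setT false 0) integral_setU //=; last exact: disjoint_rays.
by rewrite null_set_integral ?add0e //; exact: measurable_funTS.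
Qed.

Section tail_moments.
Context {R : realType} (Q : probability R R).

Definition tail_mean (a : R) : R := fine (\int[Q]_(x in ray a) x%:E)%E.

Definition tail_prob (a : R) : R := fine (Q (ray a)).

Lemma kappaE (q : R) : Q `]-oo, 0]%classic = 0%E ->
  kappa Q q = tail_mean (hY Q q) / tail_mean 0.
Proof. by move=> Q_neg; rewrite /kappa integral_id_ray0. Qed.

Lemma tail_probE (a : R) : Q (ray a) = (tail_prob a)%:E.
Proof. by rewrite fineK // fin_num_measure //; exact: measurable_itv. Qed.

Hypothesis Q_int : Q.-integrable setT (fun x : R => x%:E).

Lemma tail_meanE (a : R) : (\int[Q]_(x in ray a) x%:E)%E = (tail_mean a)%:E.
Proof.
rewrite fineK // integrable_fin_num //.
exact: integrableS (measurable_itv _) (subsetT _) Q_int.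
Qed.

Lemma tail_mean_hY_le (q h : R) : 0 < q -> 0 <= h ->
  tail_mean (hY Q q) + h * tail_prob h <= tail_mean h + h * q.
Proof.
move=> q_gt0 h_ge0; have := tail_integral_bathtub Q (hY_ge0 Q q) h_ge0.
rewrite !tail_meanE [X in (_ + _ * X <= _)%E]tail_probE [X in (_ <= _ + _ * X)%E]tail_probE.
rewrite -!EFinM -!EFinD lee_fin => /le_trans; apply.
by rewrite lerD2l ler_wpM2l // -lee_fin -tail_probE tail_hY_le.
Qed.

End tail_moments.

Section mixture.
Context {R : realType} {m : nat} {w : 'I_m -> R} {p : 'I_m -> probability R R}
  {P : probability R R}.
Hypothesis w_ge0 : forall i, 0 <= w i.
Hypothesis P_mix : forall A : set R, measurable A ->
  P A = (\sum_(i < m) (w i)%:E * p i A)%E.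

Lemma mixture_null (A : set R) : measurable A -> (forall i, p i A = 0%E) ->
  P A = 0%E.
Proof. by move=> mA pA0; rewrite P_mix // big1 // => i _; rewrite pA0 mule0. Qed.

Lemma mixture_ge0_integral (D : set R) (f : R -> \bar R) : measurable D ->
  measurable_fun D f -> (forall x, D x -> 0 <= f x)%E ->
  (\int[P]_(x in D) f x = \sum_(i < m) (w i)%:E * \int[p i]_(x in D) f x)%E.
Proof.
move=> mD mf f_ge0.
(* the finite sum over ['I_m] as a [msum] over [nat], padded with [mzero] *)
pose wp n : {measure set R -> \bar R} := if insub n is Some i
  then mscale (NngNum (w_ge0 i)) (p i) else mzero.
have wpE (i : 'I_m) : wp i = mscale (NngNum (w_ge0 i)) (p i) :> {measure set R -> \bar R}.
  by rewrite /wp valK.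
rewrite (@eq_measure_integral _ _ _ _ (msum wp m)); last first.
  move=> A mA _; rewrite [LHS](P_mix _ mA) /msum.
  by apply: eq_bigr => i _; rewrite wpE.
rewrite ge0_integral_measure_sum //; apply: eq_bigr => i _.
by rewrite wpE ge0_integral_mscale.
Qed.

Hypothesis p_int : forall i, (p i).-integrable setT (fun x : R => x%:E).

Lemma mixture_integrable : P.-integrable setT (fun x : R => x%:E).
Proof.
apply/integrableP; split; first exact/measurable_EFinP.
rewrite mixture_ge0_integral //; last exact/measurableT_comp/measurable_EFinP.
apply: lte_sum_pinfty => i _; apply: lte_mul_pinfty => //; first by rewrite lee_fin.
by case/integrableP: (p_int i).
Qed.

Lemma mixture_tail_mean (a : R) : 0 <= a ->
  tail_mean P a = \sum_(i < m) w i * tail_mean (p i) a.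
Proof.
move=> a_ge0; apply: EFin_inj; rewrite -tail_meanE; last exact: mixture_integrable.
rewrite mixture_ge0_integral //; last first.
  by move=> x /=; rewrite in_itv /= andbT lee_fin => /ltW; exact: le_trans.
by rewrite -sumEFin; apply: eq_bigr => i _; rewrite tail_meanE // EFinM.
Qed.

Lemma mixture_tail_prob (a : R) :
  tail_prob P a = \sum_(i < m) w i * tail_prob (p i) a.
Proof.
apply: EFin_inj; rewrite -tail_probE P_mix; last exact: measurable_itv.
by rewrite -sumEFin; apply: eq_bigr => i _; rewrite tail_probE EFinM.
Qed.

Lemma mixture_tail_mean_hY (q : R) : 0 < q -> \sum_(i < m) w i = 1 ->
  (forall i x, p i [set x] = 0%E) ->
  \sum_(i < m) w i * tail_mean (p i) (hY (p i) q) <= tail_mean P (hY P q).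
Proof.
move=> q_gt0 w1 p_atomless; set h := hY P q.
have h_ge0 : 0 <= h := hY_ge0 P q.
have lagrangian : \sum_(i < m) w i * tail_mean (p i) (hY (p i) q) + h * tail_prob P h
    <= tail_mean P h + h * q.
  rewrite mixture_tail_mean // mixture_tail_prob mulr_sumr -big_split /=.
  rewrite -[h * q]mul1r -w1 mulr_suml -big_split /= ler_sum // => i _.
  by rewrite mulrCA -!mulrDr ler_wpM2l ?tail_mean_hY_le.
have P_tail : h * q <= h * tail_prob P h.
  have [->|h_neq0] := eqVneq h 0; first by rewrite !mul0r.
  rewrite ler_wpM2l // -lee_fin -tail_probE tail_hY_ge //; last by rewrite lt0r h_neq0.
  by move=> x; apply: mixture_null => //; exact: measurable_set1.
by rewrite -(lerD2r (h * tail_prob P h)); apply: le_trans lagrangian _; rewrite lerD2l.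
Qed.

End mixture.

Theorem mainTheorem4 (R : realType) (m : nat) (q : R) (w : 'I_m -> R)
  (p : 'I_m -> probability R R) (P : probability R R) (mu : R) :
  0 < q < 1 ->
  (forall i, 0 < w i) -> \sum_(i < m) w i = 1 ->
  (* each X_i is positive: P(X_i <= 0) = 0 *)
  (forall i, p i `]-oo, 0]%classic = 0%E) ->
  (* each X_i has a continuous (atomless) distribution *)
  (forall i (x : R), p i [set x] = 0%E) ->
  (* each X_i has finite mean, equal to mu > 0 *)
  (forall i, (p i).-integrable setT (fun x : R => x%:E)) ->
  (forall i, (\int[p i]_x x%:E)%E = mu%:E) -> 0 < mu ->
  (* P is the mixture distribution sum_i w_i p_i *)
  (forall A : set R, measurable A -> P A = (\sum_(i < m) (w i)%:E * p i A)%E) ->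
  \sum_(i < m) w i * kappa (p i) q <= kappa P q.
Proof.
move=> /andP[q_gt0 _] w_gt0 w1 p_pos p_atomless p_int p_mean mu_gt0 P_mix.
have w_ge0 i : 0 <= w i := ltW (w_gt0 i).
have P_pos : P `]-oo, 0]%classic = 0%E.
  by apply: (mixture_null P_mix) => //; exact: measurable_itv.
have p_mu i : tail_mean (p i) 0 = mu.
  have := p_mean i; rewrite integral_id_ray0; last exact: p_pos.
  by rewrite /tail_mean => ->.
have P_mu : tail_mean P 0 = mu.
  rewrite (mixture_tail_mean w_ge0 P_mix p_int) //.
  by under eq_bigr do rewrite p_mu; rewrite -mulr_suml w1 mul1r.
rewrite kappaE // P_mu.
under eq_bigr do rewrite kappaE // p_mu mulrA.
rewrite -mulr_suml ler_wpM2r ?invr_ge0 ?(ltW mu_gt0) //.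
exact: mixture_tail_mean_hY.
Qed.
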